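(* Let $V$ be a unitary lowest weight representation of $\hat{G}_{\Lambda,\Lambda_F}$ with lowest weight $h$. Then there exist $\alpha\in\mathbb{R}$ and $N\in\mathbb{N}$ such that $h_I(\lambda_1;I;\lambda_2)=\alpha$ for all $\lambda_1,\lambda_2\in\{1,\dots,\Lambda_F\}$ and all sequences $I$ with $\#(I)\ge N$.
   Context: Fix positive integers $\Lambda,\Lambda_F$. A sequence $\dot I=i_1\cdots i_a$ is a finite, possibly empty, sequence of integers in $\{1,\dots,\Lambda\}$; $\#(\dot I)=a$, juxtaposition denotes concatenation, and $\delta^{\dot I}_{\dot J}$ is $1$ if $\dot I=\dot J$ and $0$ otherwise (similarly for integers). Let $\mathcal{T}_o$ be the complex vector space with basis the symbols $\bar\phi^{\lambda_1}\otimes s^{\dot K}\otimes\phi^{\lambda_2}$, $1\le\lambda_1,\lambda_2\le\Lambda_F$, $\dot K$ any sequence. For all sequences $\dot I,\dot J$ and all $\lambda_i\in\{1,\dots,\Lambda_F\}$ define linear operators on $\mathcal{T}_o$: first kind: $\bar\Xi^{\lambda_1}_{\lambda_2}\otimes f^{\dot I}_{\dot J}\otimes\Xi^{\lambda_3}_{\lambda_4}(\bar\phi^{\lambda_5}\otimes s^{\dot K}\otimes\phi^{\lambda_6})=\delta^{\lambda_5}_{\lambda_2}\delta^{\dot K}_{\dot J}\delta^{\lambda_6}_{\lambda_4}\,\bar\phi^{\lambda_1}\otimes s^{\dot I}\otimes\phi^{\lambda_3}$; second kind: $\bar\Xi^{\lambda_1}_{\lambda_2}\otimes l^{\dot I}_{\dot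 J}(\bar\phi^{\lambda_3}\otimes s^{\dot K}\otimes\phi^{\lambda_4})=\delta^{\lambda_3}_{\lambda_2}\sum_{\dot K_1\dot K_2=\dot K}\delta^{\dot K_1}_{\dot J}\,\bar\phi^{\lambda_1}\otimes s^{\dot I\dot K_2}\otimes\phi^{\lambda_4}$; third kind: $r^{\dot I}_{\dot J}\otimes\Xi^{\lambda_1}_{\lambda_2}(\bar\phi^{\lambda_3}\otimes s^{\dot K}\otimes\phi^{\lambda_4})=\delta^{\lambda_4}_{\lambda_2}\sum_{\dot K_1\dot K_2=\dot K}\delta^{\dot K_2}_{\dot J}\,\bar\phi^{\lambda_3}\otimes s^{\dot K_1\dot I}\otimes\phi^{\lambda_1}$; fourth kind: $\sigma^{\dot I}_{\dot J}(\bar\phi^{\lambda_1}\otimes s^{\dot K}\otimes\phi^{\lambda_2})=\sum_{\dot K_1\dot K_2\dot K_3=\dot K}\delta^{\dot K_2}_{\dot J}\,\bar\phi^{\lambda_1}\otimes s^{\dot K_1\dot I\dot K_3}\otimes\phi^{\lambda_2}$; sums over all ways to write $\dot K$ as a concatenation of possibly empty sequences. The open string algebra $\hat{G}_{\Lambda,\Lambda_F}$ is the Lie algebra (commutator bracket) of operators on $\mathcal{T}_o$ spanned by these operators. Ordering: for finite sequences of positive integers $a=a_1\cdots a_m$, $b=b_1\cdots b_n$, $a>b$ means $m>n$, or $m=n\ne0$ and $a_r>b_r$ at the first index $r$ where they differ (applied to concatenations like $\dot I\lambda_1\lambda_3$). $G^{00}$ is the span of all $\bar\Xi^{\lambda_1}_{\lambda_1}\otimes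 f^{\dot I}_{\dot I}\otimes\Xi^{\lambda_2}_{\lambda_2}$, $\bar\Xi^{\lambda}_{\lambda}\otimes l^{\dot I}_{\dot I}$, $r^{\dot I}_{\dot I}\otimes\Xi^{\lambda}_{\lambda}$, $\sigma^{\dot I}_{\dot I}$. $G^-$ is the span of all operators of the four kinds with $\#(\dot I)<\#(\dot J)$, together with those with $\#(\dot I)=\#(\dot J)$ and $\dot J\lambda_2\lambda_4>\dot I\lambda_1\lambda_3$ (first kind), $\dot J\lambda_2>\dot I\lambda_1$ (second and third kind), $\dot J>\dot I$ (fourth kind). $\omega$ is the antilinear anti-involution swapping upper and lower indices: $\omega(\bar\Xi^{\lambda_1}_{\lambda_2}\otimes f^{\dot I}_{\dot J}\otimes\Xi^{\lambda_3}_{\lambda_4})=\bar\Xi^{\lambda_2}_{\lambda_1}\otimes f^{\dot J}_{\dot I}\otimes\Xi^{\lambda_4}_{\lambda_3}$, $\omega(\bar\Xi^{\lambda_1}_{\lambda_2}\otimes l^{\dot I}_{\dot J})=\bar\Xi^{\lambda_2}_{\lambda_1}\otimes l^{\dot J}_{\dot I}$, $\omega(r^{\dot I}_{\dot J}\otimes\Xi^{\lambda_1}_{\lambda_2})=r^{\dot J}_{\dot I}\otimes\Xi^{\lambda_2}_{\lambda_1}$, $\omega(\sigma^{\dot I}_{\dot J})=\sigma^{\dot J}_{\dot I}$. A lowest weight $h$ is a linear functional on $G^{00}$ real on the spanning operators; $h_I(\lambda_1;\dot I;\lambda_2)$ denotes its value on $\bar\Xi^{\lambda_1}_{\lambda_1}\otimes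 f^{\dot I}_{\dot I}\otimes\Xi^{\lambda_2}_{\lambda_2}$. A unitary lowest weight representation with lowest weight $h$ is a representation $V$ generated by a vector $v\ne0$ with $G^-v=0$ and $Hv=h(H)v$ for $H\in G^{00}$, carrying a positive definite Hermitian form with $\langle Xu,w\rangle=\langle u,\omega(X)w\rangle$ for all $X$. *)

(* Complex scalars are R[i] for an arbitrary realType R
   (every realType is isomorphic to the real numbers). *)
From mathcomp Require Import all_boot all_order all_algebra.
From mathcomp Require Import reals.
From mathcomp.real_closed Require Export complex.
Set Implicit Arguments.
Unset Strict Implicit.
Unset Printing Implicit Defensive.
Import GRing.Theory Num.Theory.
Local Open Scope ring_scope.

Section OpenString.
Variables (L LF : nat).
(* Letters i in {1..L} are encoded as 'I_L (value i-1);
   flavours lambda in {1..LF} as 'I_LF (value lambda-1). *)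
Definition word := seq 'I_L.

(* Labels of the spanning operators of the open string algebra.
   GF a b I J c d = bar Xi^a_b (x) f^I_J (x) Xi^c_d
   GL a b I J     = bar Xi^a_b (x) l^I_J
   GR I J a b     = r^I_J (x) Xi^a_b
   GS I J         = sigma^I_J                                        *)
Inductive gen : Type :=
| GF of 'I_LF & 'I_LF & word & word & 'I_LF & 'I_LF
| GL of 'I_LF & 'I_LF & word & word
| GR of word & word & 'I_LF & 'I_LF
| GS of word & word.

(* basis vectors  bar phi^l1 (x) s^K (x) phi^l2  of T_o *)
Definition basis := ('I_LF * word * 'I_LF)%type.

Variable C : numClosedFieldType.

(* elements of T_o as finite formal sums of basis vectors *)
Definition fvec := seq (C * basis).
Definition coef (v : fvec) (b : basis) : C :=
  \sum_(p <- v) (if p.2 == b then p.1 else 0).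
Definition scalev (c : C) (v : fvec) : fvec := [seq (c * q.1, q.2) | q <- v].

Definition splits2 (K : word) : seq (word * word) :=
  [seq (take n K, drop n K) | n <- iota 0 (size K).+1].
Definition splits3 (K : word) : seq (word * word * word) :=
  flatten [seq [seq (take n K, take (m - n) (drop n K), drop m K)
               | m <- iota n ((size K).+1 - n)] | n <- iota 0 (size K).+1].

Definition op (g : gen) (x : basis) : fvec :=
  let: (l1, K, l2) := x in
  match g with
  | GF a b Iw Jw c d =>
      if [&& l1 == b, K == Jw & l2 == d] then [:: (1, (a, Iw, c))] else [::]
  | GL a b Iw Jw =>
      if l1 == b then
        [seq (1, (a, Iw ++ s.2, l2)) | s <- splits2 K & s.1 == Jw] else [::]
  | GR Iw Jw a b =>
      if l2 == b then
        [seq (1, (l1, s.1 ++ Iw, a)) | s <- splits2 K & s.2 == Jw] else [::]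
  | GS Iw Jw =>
      [seq (1, (l1, t.1.1 ++ Iw ++ t.2, l2)) | t <- splits3 K & t.1.2 == Jw]
  end.

(* linear operators on T_o, given by their values on the basis *)
Definition applyv (f : basis -> fvec) (v : fvec) : fvec :=
  flatten [seq scalev q.1 (f q.2) | q <- v].
Definition op_eq (f g : basis -> fvec) : Prop :=
  forall x y, coef (f x) y = coef (g x) y.

(* elements of hat G: finite linear combinations of spanning operators *)
Definition comb := seq (C * gen).
Definition act (X : comb) : basis -> fvec :=
  fun x => flatten [seq scalev p.1 (op p.2 x) | p <- X].
Definition op_comm (f g : basis -> fvec) : basis -> fvec :=
  fun x => applyv f (g x) ++ scalev (-1) (applyv g (f x)).

Definition omega_gen (g : gen) : gen :=
  match g with
  | GF a b Iw Jw c d => GF b a Jw Iw d c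
  | GL a b Iw Jw => GL b a Jw Iw
  | GR Iw Jw a b => GR Jw Iw b a
  | GS Iw Jw => GS Jw Iw
  end.
Definition omega (X : comb) : comb := [seq (p.1^*, omega_gen p.2) | p <- X].

Fixpoint lex_gt (a b : seq nat) : bool :=
  match a, b with
  | x :: a', y :: b' => if x == y then lex_gt a' b' else (y < x)%N
  | _, _ => false
  end.
Definition seq_gt (a b : seq nat) : bool :=
  (size b < size a)%N || [&& size a == size b, size a != 0%N & lex_gt a b].
(* back to the integer values 1..L, 1..LF *)
Definition encw (I : word) : seq nat := [seq (val i).+1 | i <- I].
Definition encf (l : 'I_LF) : nat := (val l).+1.

Definition in_Gminus (g : gen) : bool :=
  match g with
  | GF a b Iw Jw c d => (size Iw < size Jw)%N ||
      ((size Iw == size Jw) && seq_gt (encw Jw ++ [:: encf b; encf d])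
                                     (encw Iw ++ [:: encf a; encf c]))
  | GL a b Iw Jw => (size Iw < size Jw)%N ||
      ((size Iw == size Jw) && seq_gt (encw Jw ++ [:: encf b]) (encw Iw ++ [:: encf a]))
  | GR Iw Jw a b => (size Iw < size Jw)%N ||
      ((size Iw == size Jw) && seq_gt (encw Jw ++ [:: encf b]) (encw Iw ++ [:: encf a]))
  | GS Iw Jw => (size Iw < size Jw)%N || ((size Iw == size Jw) && seq_gt (encw Jw) (encw Iw))
  end.

Definition in_G00 (g : gen) : bool :=
  match g with
  | GF a b Iw Jw c d => [&& a == b, Iw == Jw & c == d]
  | GL a b Iw Jw => (a == b) && (Iw == Jw)
  | GR Iw Jw a b => (Iw == Jw) && (a == b)
  | GS Iw Jw => Iw == Jw
  end.

Section Rep.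
Variable V : lmodType C.
Variable rho : gen -> V -> V.

Definition rhohat (X : comb) (u : V) : V := \sum_(p <- X) p.1 *: rho p.2 u.

(* rho extends to a well-defined Lie algebra homomorphism
   hat G -> End(V) (commutator bracket on both sides) *)
Definition is_rep : Prop :=
  (forall g c u w, rho g (c *: u + w) = c *: rho g u + rho g w) /\
  (forall X, op_eq (act X) (fun _ => [::]) -> forall u, rhohat X u = 0) /\
  (forall X Y Z, op_eq (act Z) (op_comm (act X) (act Y)) ->
     forall u, rhohat Z u = rhohat X (rhohat Y u) - rhohat Y (rhohat X u)).

(* lowest weight: a linear functional on G^00 (given by its values on the
   spanning operators of G^00), real on those spanning operators *)
Definition hhat (h : gen -> C) (X : comb) : C := \sum_(p <- X) p.1 * h p.2.
Definition lowest_weight (h : gen -> C) : Prop :=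
  (forall g, in_G00 g -> h g \is Num.real) /\
  (forall X, all (fun p => in_G00 p.2) X ->
     op_eq (act X) (fun _ => [::]) -> hhat h X = 0).

Definition lowest_weight_rep (h : gen -> C) (v : V) : Prop :=
  [/\ v <> 0,
      (forall w, exists ws : seq (C * seq gen),
          w = \sum_(p <- ws) p.1 *: foldr rho v p.2),
      (forall X, all (fun p => in_Gminus p.2) X -> rhohat X v = 0) &
      (forall X, all (fun p => in_G00 p.2) X -> rhohat X v = hhat h X *: v)].

Definition unitary_form (form : V -> V -> C) : Prop :=
  [/\ (forall c x y w, form (c *: x + y) w = c^* * form x w + form y w),
      (forall u x y c, form u (c *: x + y) = c * form u x + form u y),
      (forall u w, form u w = (form w u)^*),
      (forall u, u <> 0 -> 0 < form u u) &
      (forall X u w, form (rhohat X u) w = form u (rhohat (omega X) w))].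
End Rep.
End OpenString.

(* If |J| < |I|, the operator e = GF a b I J c d, its image under omega (which
   annihilates v) and their commutator form an sl2-triple; unitarity then forces
   fweight (b, J, d) - fweight (a, I, c) to be a natural number.
   The norm of (GL l l (I i) I) v shows gweight l (I i) <= gweight l I, and the
   operator identity GL l l I I = sum_c GF l l I I c c + sum_i GL l l (I i) (I i)
   turns this into a lower bound for fweight on nonempty words.
   A function bounded below that drops by natural numbers whenever the word
   gets longer is eventually constant. *)

From mathcomp Require Import all_boot all_order all_algebra.
From mathcomp Require Import reals boolp.
From mathcomp.real_closed Require Import complex.
From mathcomp Require Import ring lra.
Import Order.TTheory GRing.Theory Num.Theory.
Local Open Scope ring_scope.
Local Open Scope complex_scope.
Local Notation Re := complex.Re.

Lemma sum_prefix_rcons (T : finType) (I K : seq T) :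
  (\sum_(i : T) prefix (rcons I i) K = prefix I K && (K != I))%N.
Proof.
case: (boolP (prefix I K)) => [/prefixP [[|k K'] ->] | nIK] /=.
- rewrite cats0 eqxx big1 // => i _.
  by apply/eqP; rewrite eqb0; apply: contraTN isT => /size_prefix; rewrite size_rcons ltnn.
- have -> : (I ++ k :: K' != I).
    by apply/eqP => /(congr1 size)/eqP; rewrite size_cat -[X in _ == X]addn0 eqn_add2l.
  rewrite (bigD1 k) //= big1 ?addn0 => [|i /negbTE ik];
    by rewrite -cats1 prefix_catr //= ?eqxx ?ik ?prefix0s.
- by rewrite big1 // => i _; apply/eqP; rewrite eqb0; apply: contra nIK;
    rewrite -cats1 => /catl_prefix.
Qed.

Lemma eventually_constant_of_nat_gaps (R : archiRealDomainType) (T : Type)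
    (sz : T -> nat) (f : T -> R) (N0 : nat) (B : R) :
  (forall x y, (sz x < sz y)%N -> exists n : nat, f x - f y = n%:R) ->
  (forall x, (N0 <= sz x)%N -> B <= f x) ->
  exists (alpha : R) (N : nat), forall x, (N <= sz x)%N -> f x = alpha.
Proof.
move=> gap_nat f_ge.
have [[x0 x0_ge]|no_x0] := pselect (exists x, (N0 <= sz x)%N); last first.
  by exists 0, N0 => x x_ge; exfalso; apply: no_x0; exists x.
pose below k := exists x, (sz x0 < sz x)%N /\ f x0 - f x = k%:R.
have [[k0 below_k0]|no_below] := pselect (exists k, below k); last first.
  exists 0, (sz x0).+1 => x x0_x; have [n fn] := gap_nat x0 x x0_x.
  by exfalso; apply: no_below; exists n, x.
have below_le k : `[< below k >] -> (k <= Num.truncn (f x0 - B))%N.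
  move=> /asboolP [x [x0_x fk]]; rewrite -ltnS -(ltr_nat R) -fk.
  apply: le_lt_trans (truncnS_gt _); apply: lerB => //.
  by apply: f_ge; apply: leq_trans x0_ge (ltnW x0_x).
have below_ex : exists k, `[< below k >] by exists k0; apply/asboolP.
(* x1 realises the largest drop below f x0; anything longer than x1 would drop further. *)
case: (ex_maxnP below_ex below_le) => k1 /asboolP [x1 [x0_x1 fk1]] k1_max.
exists (f x1), (sz x1).+1 => y x1_y; have [m fm] := gap_nat x1 y x1_y.
have /asboolP/k1_max : below (k1 + m)%N.
  exists y; split; last by rewrite natrD -fk1 -fm; ring.
  exact: ltn_trans x0_x1 x1_y.
rewrite -[X in (_ <= X)%N]addn0 leq_add2l leqn0 => /eqP m0.
by apply/eqP; rewrite eq_sym -subr_eq0 fm m0.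
Qed.

Section Calculus.
Context {L LF : nat} {C : numClosedFieldType}.
Local Notation basis := (basis L LF).
Local Notation gen := (gen L LF).
Local Notation fvec := (fvec L LF C).
Implicit Types (f : basis -> fvec) (w : fvec) (x y z : basis) (X Y : comb L LF C).

Lemma coef_nil y : coef ([::] : fvec) y = 0.
Proof. by rewrite /coef big_nil. Qed.

Lemma coef_cat w1 w2 y : coef (w1 ++ w2) y = coef w1 y + coef w2 y.
Proof. by rewrite /coef big_cat. Qed.

Lemma coef_unit (c : C) x y : coef [:: (c, x)] y = c * (x == y)%:R.
Proof. by rewrite /coef big_seq1; case: eqP; rewrite ?mulr1 ?mulr0. Qed.

Lemma coef_scalev (c : C) w y : coef (scalev c w) y = c * coef w y.
Proof.
rewrite /coef big_map big_distrr; apply: eq_bigr => p _ /=.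
by case: ifP; rewrite ?mulr0.
Qed.

Lemma coef_flatten (s : seq fvec) y : coef (flatten s) y = \sum_(w <- s) coef w y.
Proof.
elim: s => [|w s IH]; first by rewrite big_nil coef_nil.
by rewrite /= coef_cat IH big_cons.
Qed.

Lemma coef_act X x y : coef (act X x) y = \sum_(p <- X) p.1 * coef (op C p.2 x) y.
Proof.
by rewrite /act coef_flatten big_map; apply: eq_bigr => p _; rewrite coef_scalev.
Qed.

Lemma coef_applyv f w y : coef (applyv f w) y = \sum_(q <- w) q.1 * coef (f q.2) y.
Proof.
by rewrite /applyv coef_flatten big_map; apply: eq_bigr => p _; rewrite coef_scalev.
Qed.

Lemma coef_applyv_act X w y :
  coef (applyv (act X) w) y = \sum_(p <- X) p.1 * coef (applyv (op C p.2) w) y.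
Proof.
rewrite coef_applyv; under eq_bigr do rewrite coef_act big_distrr.
rewrite exchange_big; apply: eq_bigr => p _; rewrite coef_applyv big_distrr.
by apply: eq_bigr => q _; exact: mulrCA.
Qed.

Lemma coef_applyv_cat f w1 w2 y :
  coef (applyv f (w1 ++ w2)) y = coef (applyv f w1) y + coef (applyv f w2) y.
Proof. by rewrite !coef_applyv big_cat. Qed.

Lemma coef_applyv_scalev f (c : C) w y :
  coef (applyv f (scalev c w)) y = c * coef (applyv f w) y.
Proof.
rewrite !coef_applyv big_map big_distrr; apply: eq_bigr => q _ /=.
by rewrite mulrA.
Qed.

Lemma coef_applyv_actr f X x y :
  coef (applyv f (act X x)) y = \sum_(p <- X) p.1 * coef (applyv f (op C p.2 x)) y.
Proof.
rewrite /act; elim: X => [|p X IH]; first by rewrite big_nil /applyv coef_nil.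
by rewrite /= coef_applyv_cat coef_applyv_scalev IH big_cons.
Qed.

Lemma coef_op_comm X Y x y :
  coef (op_comm (act X) (act Y) x) y =
  \sum_(p <- X) \sum_(q <- Y) p.1 * q.1 *
    (coef (applyv (op C p.2) (op C q.2 x)) y - coef (applyv (op C q.2) (op C p.2 x)) y).
Proof.
rewrite /op_comm coef_cat coef_scalev !coef_applyv_act mulN1r.
under eq_bigr do rewrite coef_applyv_actr big_distrr.
under [X in _ - X]eq_bigr do rewrite coef_applyv_actr big_distrr.
rewrite [X in _ - X]exchange_big -sumrB; apply: eq_bigr => p _.
by rewrite -sumrB; apply: eq_bigr => q _ /=; ring.
Qed.

Lemma coef_applyv_if f (b : bool) x y :
  coef (applyv f (if b then [:: (1, x)] else [::])) y = if b then coef (f x) y else 0.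
Proof.
by case: b; rewrite /applyv /= ?cats0 ?coef_scalev ?mul1r ?coef_nil.
Qed.

Lemma op_GF a b I J c d z :
  op C (GF a b I J c d) z = if z == (b, J, d) then [:: (1, (a, I, c))] else [::].
Proof. by case: z => [[l1 K] l2] /=; rewrite !xpair_eqE andbA. Qed.

Lemma splits2_prefix (K J : word L) :
  [seq s <- splits2 K | s.1 == J] =
  if prefix J K then [:: (J, drop (size J) K)] else [::].
Proof.
have take_eqE : {in iota 0 (size K).+1,
    (fun n => take n K == J) =1 (fun n => prefix J K && (n == size J))}.
  move=> n; rewrite mem_iota add0n ltnS /= => le_nK; rewrite prefixE.
  case: eqP => [<-|]; first by rewrite size_take_min (minn_idPl le_nK) !eqxx.
  move=> neq; case: (eqVneq n (size J)) => [n_eq|]; last by rewrite andbF.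
  by rewrite -n_eq andbT (introF eqP neq).
rewrite /splits2 filter_map (eq_in_filter take_eqE).
case: ifP => [pJK|_]; last by rewrite filter_pred0.
rewrite filter_pred1_uniq ?iota_uniq ?mem_iota ?ltnS ?size_prefix //=.
by move: pJK; rewrite prefixE => /eqP ->.
Qed.

Lemma op_GL (a b : 'I_LF) (I J : word L) l1 K l2 :
  op C (GL a b I J) (l1, K, l2) =
  if (l1 == b) && prefix J K then [:: (1, (a, I ++ drop (size J) K, l2))] else [::].
Proof.
by cbn [op]; rewrite splits2_prefix; case: (l1 == b); case: (prefix J K).
Qed.

Lemma coef_GF_comp a b I J c d a' b' I' J' c' d' z y :
  coef (applyv (op C (GF a b I J c d)) (op C (GF a' b' I' J' c' d') z)) y =
  ((a', I', c') == (b, J, d) :> basis)%:R * coef (op C (GF a b' I J' c d') z) y.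
Proof.
rewrite [op C (GF a' _ _ _ _ _) z]op_GF coef_applyv_if !op_GF.
by case: (z == _); case: (_ == _); rewrite ?coef_nil ?mul1r ?mul0r.
Qed.

Lemma coef_GL_comp (a b c : 'I_LF) (I J K : word L) z y :
  coef (applyv (op C (GL a b I J)) (op C (GL b c J K) z)) y =
  coef (op C (GL a c I K) z) y.
Proof.
case: z => [[l1 K'] l2]; rewrite !op_GL coef_applyv_if.
case: ifP => _; last by rewrite coef_nil.
by rewrite (op_GL a b I J b) eqxx prefix_prefix drop_size_cat.
Qed.

Lemma comm_GF_omega a b I J c d :
  op_eq (act ([:: (1, GF b b J J d d); (-1, GF a a I I c c)] : comb L LF C))
        (op_comm (act [:: (1, GF b a J I d c)]) (act [:: (1, GF a b I J c d)])).
Proof.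
move=> z y; rewrite coef_op_comm coef_act !big_cons !big_nil /=.
by rewrite !coef_GF_comp /= !eqxx /=; ring.
Qed.

Lemma comm_GF_Cartan a b I J c d : (a, I, c) != (b, J, d) :> basis ->
  op_eq (act ([:: (-2, GF a b I J c d)] : comb L LF C))
        (op_comm (act [:: (1, GF b b J J d d); (-1, GF a a I I c c)])
                 (act [:: (1, GF a b I J c d)])).
Proof.
move=> /negbTE xy z y; rewrite coef_op_comm coef_act !big_cons !big_nil /=.
by rewrite !coef_GF_comp /= !eqxx xy /=; ring.
Qed.

Lemma comm_GL (l : 'I_LF) (I J : word L) :
  op_eq (act ([:: (1, GL l l I I); (-1, GL l l J J)] : comb L LF C))
        (op_comm (act [:: (1, GL l l I J)]) (act [:: (1, GL l l J I)])).
Proof.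
move=> z y; rewrite coef_op_comm coef_act !big_cons !big_nil /=.
by rewrite !coef_GL_comp; ring.
Qed.

Lemma coef_GF_diag l I c z y :
  coef (op C (GF l l I I c c) z) y = (z == (l, I, c))%:R * (z == y)%:R.
Proof. by rewrite op_GF; case: eqP => [->|_]; rewrite ?coef_unit ?coef_nil ?mul0r. Qed.

Lemma coef_GL_diag (l : 'I_LF) (I : word L) l1 K l2 y :
  coef (op C (GL l l I I) (l1, K, l2)) y =
  ((l1 == l) && prefix I K)%:R * ((l1, K, l2) == y)%:R.
Proof.
rewrite op_GL; case: ifP => [/andP[/eqP -> /prefixP [K' ->]]|_].
  by rewrite drop_size_cat // coef_unit.
by rewrite coef_nil mul0r.
Qed.

Definition GL_split (l : 'I_LF) (I : word L) : comb L LF C :=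
  (1, GL l l I I) :: [seq (-1, GF l l I I c c) | c <- index_enum 'I_LF] ++
                     [seq (-1, GL l l (rcons I i) (rcons I i)) | i <- index_enum 'I_L].

Lemma GL_split_G00 l I : all (fun p => in_G00 p.2) (GL_split l I).
Proof.
rewrite /= !eqxx /= all_cat !all_map.
by apply/andP; split; apply/allP => x _ /=; rewrite !eqxx.
Qed.

(* A word with prefix I is either I or starts with I i for exactly one letter i. *)
Lemma GL_split_vanishes l I : op_eq (act (GL_split l I)) (fun _ => [::]).
Proof.
move=> [[l1 K] l2] y; rewrite coef_act coef_nil big_cons big_cat !big_map.
cbn [fst snd]; rewrite coef_GL_diag.
under eq_bigr do rewrite coef_GF_diag mulrA.
under [X in _ + (_ + X)]eq_bigr do rewrite coef_GL_diag mulrA.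
rewrite -!big_distrl /= -!big_distrr /= -!natr_sum.
have -> : (\sum_(c < LF) ((l1, K, l2) == (l, I, c)) = (l1 == l) && (K == I))%N.
  rewrite (bigD1 l2) //= big1 ?addn0 => [|c /negbTE c_l2].
    by rewrite !xpair_eqE eqxx andbT.
  by rewrite !xpair_eqE [l2 == c]eq_sym c_l2 andbF.
have -> : (\sum_(i < L) (l1 == l) && prefix (rcons I i) K =
           (l1 == l) && (prefix I K && (K != I)))%N.
  by case: (l1 == l) => /=; [exact: sum_prefix_rcons | apply: big1 => i].
case: (l1 == l) => /=; last by ring.
by case: (K =P I) => [->|_]; rewrite ?prefix_refl /= ?andbT; case: (prefix I K); ring.
Qed.

End Calculus.

Lemma hhat_pair (L LF : nat) (C : numClosedFieldType) (h : gen L LF -> C) g1 g2 :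
  hhat h [:: (1, g1); (-1, g2)] = h g1 - h g2.
Proof. by rewrite /hhat !big_cons big_nil /= mul1r mulN1r addr0. Qed.

Section Representation.
Context {L LF : nat} {C : numClosedFieldType} {V : lmodType C}.
Context {rho : gen L LF -> V -> V} {h : gen L LF -> C} {v : V} {form : V -> V -> C}.
Hypotheses (rho_rep : is_rep rho) (v_lowest : lowest_weight_rep rho h v)
  (form_unitary : unitary_form rho form).

Lemma rho0 g : rho g 0 = 0.
Proof.
case: rho_rep => lin _.
by have := lin g (-1) 0 0; rewrite scaler0 add0r scaleN1r addNr.
Qed.

Lemma rhoZ g c u : rho g (c *: u) = c *: rho g u.
Proof. by case: rho_rep => lin _; have := lin g c u 0; rewrite !addr0 rho0 addr0. Qed.

Lemma rhohat1 c g u : rhohat rho [:: (c, g)] u = c *: rho g u.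
Proof. by rewrite /rhohat big_seq1. Qed.

Lemma rho_comm u {X Y Z} : op_eq (act Z) (op_comm (act X) (act Y)) ->
  rhohat rho Z u = rhohat rho X (rhohat rho Y u) - rhohat rho Y (rhohat rho X u).
Proof. by case: rho_rep => _ [_ comm] /comm. Qed.

Lemma rho_Gminus {g} : in_Gminus g -> rho g v = 0.
Proof.
case: v_lowest => _ _ lowest _ g_minus.
by have := lowest [:: (1, g)]; rewrite rhohat1 scale1r /= g_minus; apply.
Qed.

Lemma rhohat_G00 Z : all (fun p => in_G00 p.2) Z -> rhohat rho Z v = hhat h Z *: v.
Proof. by case: v_lowest => _ _ _; apply. Qed.

Lemma form_adjoint g u w : form (rho g u) w = form u (rho (omega_gen g) w).
Proof.
case: form_unitary => _ _ _ _ adj; have := adj [:: (1, g)] u w.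
by rewrite /omega /= !rhohat1 conjC1 !scale1r.
Qed.

Lemma formZr u c w : form u (c *: w) = c * form u w.
Proof.
case: form_unitary => _ lin _ _ _; have form0 : form u 0 = 0.
  by have := lin u 0 0 (-1); rewrite scaler0 add0r mulN1r addNr.
by have := lin u w 0 c; rewrite !addr0 form0 addr0.
Qed.

Lemma form_ge0 u : 0 <= form u u.
Proof.
case: form_unitary => lin _ _ pos _; have [->|u0] := eqVneq u 0; last first.
  by apply/ltW/pos/eqP.
by have := lin (-1) 0 0 0; rewrite scaler0 add0r rmorphN1 mulN1r addNr => ->.
Qed.

Lemma form_vv_gt0 : 0 < form v v.
Proof. by case: form_unitary => _ _ _ pos _; case: v_lowest => /pos. Qed.

Lemma hhat_comm_omega_ge0 {g Z} :
  in_Gminus (omega_gen g) -> all (fun p => in_G00 p.2) Z ->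
  op_eq (act Z) (op_comm (act [:: (1, omega_gen g)]) (act [:: (1, g)])) ->
  0 <= hhat h Z.
Proof.
move=> g_minus Z00 /(rho_comm v); rewrite rhohat_G00 // !rhohat1 !scale1r.
rewrite (rho_Gminus g_minus) rho0 subr0 => Zv.
have := form_ge0 (rho g v); rewrite form_adjoint -Zv formZr.
by rewrite pmulr_lge0 // form_vv_gt0.
Qed.

Section SL2.
Context {e : gen L LF} {H : comb L LF C}.
Hypotheses (f_minus : in_Gminus (omega_gen e)) (H00 : all (fun p => in_G00 p.2) H)
  (comm_fe : op_eq (act H) (op_comm (act [:: (1, omega_gen e)]) (act [:: (1, e)])))
  (comm_he : op_eq (act [:: (-2, e)]) (op_comm (act H) (act [:: (1, e)]))).

Local Notation mu := (hhat h H).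
Local Notation w k := (iter k (rho e) v).

Lemma sl2_weight k : rhohat rho H (w k) = (mu - 2 * k%:R) *: w k.
Proof.
elim: k => [|k IH]; first by rewrite /= rhohat_G00 // mulr0 subr0.
have := rho_comm (w k) comm_he; rewrite !rhohat1 !scale1r IH rhoZ /= => comm.
rewrite -[rhohat _ _ _](subrK ((mu - 2 * k%:R) *: rho e (w k))) -comm -scalerDl.
by congr (_ *: _); ring.
Qed.

Lemma sl2_lower k : rho (omega_gen e) (w k.+1) = (k.+1%:R * (mu - k%:R)) *: w k.
Proof.
have fe u : rho (omega_gen e) (rho e u) = rhohat rho H u + rho e (rho (omega_gen e) u).
  by rewrite (rho_comm u comm_fe) !rhohat1 !scale1r subrK.
elim: k => [|k IH]; first by rewrite /= fe rho_Gminus // rho0 addr0 rhohat_G00 // mul1r subr0.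
rewrite [w k.+2]/= fe IH rhoZ (sl2_weight k.+1) -scalerDl; congr (_ *: _).
by ring.
Qed.

Lemma sl2_norm k :
  form (w k.+1) (w k.+1) = k.+1%:R * (mu - k%:R) * form (w k) (w k).
Proof. by rewrite [X in form X _]/= form_adjoint sl2_lower formZr. Qed.

Lemma sl2_weight_gt_nat : (forall n : nat, mu != n%:R) -> forall k : nat, k%:R < mu.
Proof.
move=> mu_notnat.
have gap k : 0 < form (w k) (w k) -> 0 < mu - k%:R.
  move=> Nk_gt0; have := form_ge0 (w k.+1).
  rewrite sl2_norm pmulr_lge0 // pmulr_rge0 ?ltr0Sn // => ge0.
  by rewrite lt_def subr_eq0 mu_notnat ge0.
have Nk_gt0 k : 0 < form (w k) (w k).
  elim: k => [|k IH]; first exact: form_vv_gt0.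
  by rewrite sl2_norm !mulr_gt0 ?ltr0Sn ?gap.
by move=> k; rewrite -subr_gt0 gap.
Qed.

End SL2.

End Representation.

Lemma complex_not_gt_nat (R : realType) (z : R[i]) : ~ (forall k : nat, k%:R < z).
Proof.
move=> /(_ (Num.truncn (Re z)).+1); rewrite -(rmorph_nat (real_complex R)) ltcE /=.
by move=> /andP[_ /lt_trans/(_ (truncnS_gt _))]; rewrite ltxx.
Qed.

Section Weights.
Context {R : realType} {L LF : nat} {V : lmodType R[i]}.
Context {rho : gen L LF -> V -> V} {h : gen L LF -> R[i]} {v : V} {form : V -> V -> R[i]}.
Hypotheses (rho_rep : is_rep rho) (h_lowest : lowest_weight h)
  (v_lowest : lowest_weight_rep rho h v) (form_unitary : unitary_form rho form).

Local Notation basis := (basis L LF).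

Definition fweight (x : basis) : R := Re (h (GF x.1.1 x.1.1 x.1.2 x.1.2 x.2 x.2)).
Definition gweight (l : 'I_LF) (I : word L) : R := Re (h (GL l l I I)).

Lemma h_G00_real g : in_G00 g -> h g = (Re (h g))%:C.
Proof. by case: h_lowest => real _ /real /RRe_real. Qed.

Lemma h_GF_diag l1 I l2 : h (GF l1 l1 I I l2 l2) = (fweight (l1, I, l2))%:C.
Proof. by rewrite h_G00_real //= !eqxx. Qed.

Lemma h_GL_diag l I : h (GL l l I I) = (gweight l I)%:C.
Proof. by rewrite h_G00_real //= !eqxx. Qed.

Lemma fweight_gap_nat x y : (size x.1.2 < size y.1.2)%N ->
  exists n : nat, fweight x - fweight y = n%:R.
Proof.
case: x y => [[b J] d] [[a I] c] /= JI.
have [[n fn]|no_n] := pselect (exists n : nat, fweight (b, J, d) - fweight (a, I, c) = n%:R).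
  by exists n.
have f_minus : in_Gminus (omega_gen (GF a b I J c d)) by rewrite /= JI.
have H00 : all (fun p => in_G00 p.2)
  ([:: (1, GF b b J J d d); (-1, GF a a I I c c)] : comb L LF R[i]) by rewrite /= !eqxx.
have xy : (a, I, c) != (b, J, d) :> basis.
  by apply: contraTneq JI => -[_ <- _]; rewrite ltnn.
have := sl2_weight_gt_nat rho_rep v_lowest form_unitary f_minus H00
  (comm_GF_omega a b I J c d) (comm_GF_Cartan a b I J c d xy).
rewrite hhat_pair !h_GF_diag -rmorphB => mu_gt; exfalso.
apply: complex_not_gt_nat; apply: mu_gt => n; apply/eqP => fn.
by apply: no_n; exists n; apply: complexI; rewrite fn rmorph_nat.
Qed.

Lemma gweight_rcons l I i : gweight l (rcons I i) <= gweight l I.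
Proof.
have f_minus : in_Gminus (omega_gen (GL l l (rcons I i) I)).
  by rewrite /= size_rcons ltnSn.
have Z00 : all (fun p => in_G00 p.2)
  ([:: (1, GL l l I I); (-1, GL l l (rcons I i) (rcons I i))] : comb L LF R[i]).
  by rewrite /= !eqxx.
have := hhat_comm_omega_ge0 rho_rep v_lowest form_unitary f_minus Z00
  (comm_GL l I (rcons I i)).
by rewrite hhat_pair !h_GL_diag -rmorphB ler0c subr_ge0.
Qed.

Lemma gweight_le_nil l I : gweight l I <= gweight l [::].
Proof. by elim/last_ind: I => // I i IH; apply: le_trans (gweight_rcons l I i) IH. Qed.

Lemma gweight_split l I :
  gweight l I = \sum_c fweight (l, I, c) + \sum_i gweight l (rcons I i).
Proof.
have := proj2 h_lowest _ (GL_split_G00 l I) (GL_split_vanishes l I).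
rewrite /hhat big_cons big_cat !big_map; cbn [fst snd].
rewrite mul1r h_GL_diag.
under eq_bigr do rewrite mulN1r h_GF_diag -rmorphN.
under [X in _ + (_ + X)]eq_bigr do rewrite mulN1r h_GL_diag -rmorphN.
rewrite -!rmorph_sum -!rmorphD => /(congr1 (@complex.Re R)) /= /eqP.
by rewrite !sumrN -opprD subr_eq0 => /eqP.
Qed.

Lemma fweight_ge l I c : (0 < size I)%N ->
  (1 - L%:R) * gweight l [::] - LF%:R * `|fweight (l, [::], l)| <= fweight (l, I, c).
Proof.
case: I => // i I' _; set I := i :: I'; set U := `|fweight (l, [::], l)|.
have L_ge1 : 1 <= L%:R :> R by rewrite ler1n (leq_ltn_trans (leq0n i) (ltn_ord i)).
have f_le_U c' : fweight (l, I, c') <= U.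
  have [n fn] := fweight_gap_nat (l, [::], l) (l, I, c') isT.
  by apply: le_trans (ler_norm _); rewrite -subr_ge0 fn ler0n.
have sum_g : \sum_i gweight l (rcons I i) <= L%:R * gweight l I.
  apply: le_trans (ler_sum _ (fun i _ => gweight_rcons l I i)) _.
  by rewrite sumr_const card_ord mulr_natl.
have sum_f_le : \sum_c' (fweight (l, I, c') - U) <= fweight (l, I, c) - U.
  rewrite (bigD1 c) //= gerDl; apply: sumr_le0 => c' _; rewrite subr_le0; exact: f_le_U.
rewrite sumrB sumr_const card_ord -mulr_natl in sum_f_le.
have := gweight_split l I; have := gweight_le_nil l I; have : 0 <= U by exact: normr_ge0.
(* nra multiplies the hypotheses L >= 1 and gweight l I <= gweight l [::]. *)
nra.
Qed.

Lemma fweight_bounded_below : exists B, forall x, (1 <= size x.1.2)%N -> B <= fweight x.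
Proof.
pose b l := (1 - L%:R) * gweight l [::] - LF%:R * `|fweight (l, [::], l)|.
exists (- \sum_l `|b l|) => -[[l I] c] /= I_gt0; apply: le_trans _ (fweight_ge l I c I_gt0).
apply: lerNnormlW; rewrite (bigD1 l) //= lerDl.
by apply: sumr_ge0 => l' _; exact: normr_ge0.
Qed.

Lemma fweight_eventually_constant :
  exists (alpha : R) (N : nat), forall x, (N <= size x.1.2)%N -> fweight x = alpha.
Proof.
have [B B_le] := fweight_bounded_below.
exact: eventually_constant_of_nat_gaps fweight_gap_nat B_le.
Qed.

End Weights.

Theorem lemma21 (R : realType) (L LF : nat) (hL : (0 < L)%N) (hLF : (0 < LF)%N)
  (V : lmodType R[i]) (rho : gen L LF -> V -> V) (h : gen L LF -> R[i])
  (v : V) (form : V -> V -> R[i]) :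
  is_rep rho -> lowest_weight h -> lowest_weight_rep rho h v ->
  unitary_form rho form ->
  exists (alpha : R) (N : nat),
    forall (l1 l2 : 'I_LF) (I : seq 'I_L), (N <= size I)%N ->
      h (GF l1 l1 I I l2 l2) = alpha%:C.
Proof.
move=> rho_rep h_lowest v_lowest form_unitary.
have [alpha [N fweight_const]] :=
  fweight_eventually_constant rho_rep h_lowest v_lowest form_unitary.
exists alpha, N => l1 l2 I N_le.
by rewrite (h_GF_diag h_lowest) (fweight_const (l1, I, l2)).
Qed.
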